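(* Let $\mathbb{F}$ be a field, $T$ a $(d,\mathbb{F})$-matrix-tree and $v$ a vertex of $T$. Let $T'=T-T_v$ be obtained by removing $v$ and all its descendants, and let $T''$ be obtained from $T$ by removing all leaves of $T_v$ labelled $L_C$. Then $M(A(T'))$ is isomorphic to $M(A(T''))$.
   Context: $T_v$ is the subtree of $T$ consisting of $v$ and all its descendants. The depth of a rooted tree is the number of edges on a longest root-to-leaf path. A $(d,\mathbb{F})$-matrix-tree is a rooted tree of depth at most $d$ with unary labels from $\{L_R,L_C\}\cup\{L_{i,\alpha}: i\in\{0,\dots,d\},\alpha\in\mathbb{F}\}$ such that: every node labelled $L_C$ is a leaf; every other non-root node is labelled $L_R$; each $L_C$-leaf at distance $k\le d$ from the root carries, for each $i\in\{0,\dots,k-1\}$, exactly one label $L_{i,\alpha}$. The matrix $A(T)$ has rows the $L_R$-nodes, columns the $L_C$-nodes, and entry at $(r,c)$ equal to $0$ if $r$ is not an ancestor of $c$, and equal to the unique $\alpha$ with $c$ labelled $L_{i,\alpha}$ if $r$ is an ancestor of $c$ at distance $i$ from the root. $M(B)$ denotes the column matroid of a matrix $B$. *)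

From mathcomp Require Import all_boot all_order all_algebra.
From Stdlib Require Import ClassicalEpsilon.
Set Implicit Arguments. Unset Strict Implicit. Unset Printing Implicit Defensive.
Import GRing.Theory.
Local Open Scope ring_scope.

Inductive label (F : Type) : Type :=
  | LR : label F
  | LC : label F
  | Lidx : nat -> F -> label F.
Arguments LR {F}. Arguments LC {F}.

Record rtree (F : Type) := RTree {
  V : finType;
  root : V;
  par : V -> V;
  par_root : par root = root;
  reach : forall x, exists n, iter n par x == root;
  lab : V -> label F -> bool
}.

Arguments root {F} r.
Arguments par {F} r _.
Arguments lab {F} r _ _.
Arguments reach {F} r x.

Section Tree.
Variables (F : fieldType) (T : rtree F).

Definition depth (x : V T) : nat :=
  ex_minn (reach T x).

Definition is_child (x y : V T) : bool := (y != root T) && (par T y == x).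

Definition leaf (x : V T) : bool := [forall y, ~~ is_child x y].

Definition ancestor (r c : V T) : bool :=
  [exists n : 'I_(depth c), iter n.+1 (par T) c == r].

Definition in_subtree (v x : V T) : bool :=
  [exists n : 'I_(depth x).+1, iter n (par T) x == v].

Definition rowT (S : {set V T}) := {x : V T | (x \in S) && lab T x LR}.
Definition colT (S : {set V T}) := {x : V T | (x \in S) && lab T x LC}.

Definition coef (c : V T) (i : nat) : F :=
  epsilon (inhabits 0) (fun a : F => lab T c (Lidx i a)).

(* the matrix A of the tree induced on S (S closed under ancestors, so that
   ancestry and distances from the root are those of T) *)
Definition Amat (S : {set V T}) (r : rowT S) (c : colT S) : F :=
  if ancestor (val r) (val c) then coef (val c) (depth (val r)) else 0.

End Tree.
Arguments Amat {F T} S r c.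

Definition matrix_tree (F : fieldType) (d : nat) (T : rtree F) : Prop :=
  [/\ (forall x : V T, (depth x <= d)%N),
      (forall x i (a : F), lab T x (Lidx i a) -> (i <= d)%N),
      (forall x, lab T x LC -> leaf x),
      (forall x, x != root T -> ~~ lab T x LC -> lab T x LR) &
      (forall x, lab T x LC -> forall i, (i < depth x)%N ->
          exists! a : F, lab T x (Lidx i a))].

(* Column matroid of a matrix B with rows Row and columns Col: ground set Col,
   X independent iff the columns indexed by X are linearly independent. *)
Definition col_indep (F : fieldType) (Row Col : finType) (B : Row -> Col -> F)
  (X : {set Col}) : Prop :=
  forall lam : Col -> F,
    (forall r, \sum_(c in X) lam c * B r c = 0) -> forall c, c \in X -> lam c = 0.

Definition matroid_iso (E1 E2 : finType)
  (I1 : {set E1} -> Prop) (I2 : {set E2} -> Prop) : Prop :=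
  exists f : E1 -> E2, bijective f /\ forall X, I1 X <-> I2 (f @: X).

(* T' = T - T_v  and  T'' = T minus the L_C-leaves of T_v, as vertex sets *)
Definition del_subtree (F : fieldType) (T : rtree F) (v : V T) : {set V T} :=
  [set x | ~~ in_subtree v x].
Definition del_Cleaves (F : fieldType) (T : rtree F) (v : V T) : {set V T} :=
  [set x | ~~ [&& in_subtree v x, leaf x & lab T x LC]].

(* The columns (L_C-leaves) of T' and T'' are the same vertices, and every row of
   T' is a row of T''.  The extra rows of T'' are the L_R-vertices of T_v; a
   vertex of T_v is an ancestor of no column of T' (the columns of T' lie
   outside T_v, which is closed under descendants), so these rows are zero and
   do not affect linear dependencies among the columns. *)

From Pilot Require Import Defs.
From mathcomp Require Import all_boot all_order all_algebra.
Set Implicit Arguments.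
Unset Strict Implicit.
Import GRing.Theory.
Local Open Scope ring_scope.

Section ColumnMatroid.
Variable F : fieldType.

Lemma col_indep_zero_or_rows (R1 R2 C : finType)
    (B1 : R1 -> C -> F) (B2 : R2 -> C -> F) (X : {set C}) :
  (forall r2, (forall c, B2 r2 c = 0) \/ exists r1, forall c, B2 r2 c = B1 r1 c) ->
  col_indep B2 X -> col_indep B1 X.
Proof.
move=> rowsB2 indB2 lam lamB1; apply: indB2 => r2.
have [B2r2_0 | [r1 B2r2]] := rowsB2 r2.
- by apply: big1 => c _; rewrite B2r2_0 mulr0.
- by under eq_bigr => c _ do rewrite B2r2; apply: lamB1.
Qed.

Lemma col_indep_same_rows (R1 R2 C : finType)
    (B1 : R1 -> C -> F) (B2 : R2 -> C -> F) (X : {set C}) :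
  (forall r1, exists r2, forall c, B1 r1 c = B2 r2 c) ->
  (forall r2, (forall c, B2 r2 c = 0) \/ exists r1, forall c, B2 r2 c = B1 r1 c) ->
  col_indep B1 X <-> col_indep B2 X.
Proof.
move=> rowsB1 rowsB2; split; last exact: col_indep_zero_or_rows.
apply: col_indep_zero_or_rows => r1; right.
by have [r2 B1r1] := rowsB1 r1; exists r2.
Qed.

Lemma col_indep_reindex (R C1 C2 : finType) (B : R -> C2 -> F)
    (f : C1 -> C2) (g : C2 -> C1) (X : {set C1}) :
  cancel f g -> col_indep (fun r c => B r (f c)) X <-> col_indep B (f @: X).
Proof.
move=> fK; have sum_imset (lam : C2 -> F) r :
    \sum_(c in f @: X) lam c * B r c = \sum_(c in X) lam (f c) * B r (f c).
  by rewrite big_imset //= => x y _ _; apply: (can_inj fK).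
split=> [indBf lam lamB _ /imsetP[c cX ->] | indB lam lamBf c cX].
- by apply: (indBf (lam \o f)) => // r; rewrite -sum_imset.
- rewrite -[c]fK; apply: (indB (lam \o g)); last exact: imset_f.
  by move=> r; rewrite sum_imset; under eq_bigr => c' _ do rewrite /= fK; apply: lamBf.
Qed.

Lemma col_indep_matroid_iso (R1 R2 C1 C2 : finType)
    (B1 : R1 -> C1 -> F) (B2 : R2 -> C2 -> F) (f : C1 -> C2) (g : C2 -> C1) :
  cancel f g -> cancel g f ->
  (forall r1, exists r2, forall c, B1 r1 c = B2 r2 (f c)) ->
  (forall r2, (forall c, B2 r2 (f c) = 0) \/
              exists r1, forall c, B2 r2 (f c) = B1 r1 c) ->
  matroid_iso (col_indep B1) (col_indep B2).
Proof.
move=> fK gK rowsB1 rowsB2; exists f; split; first by exists g.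
move=> X; rewrite -(col_indep_reindex B2 X fK).
exact: col_indep_same_rows.
Qed.

End ColumnMatroid.

Section RootedTree.
Variables (F : fieldType) (T : rtree F).

Lemma iter_par_root n : iter n (par T) (Defs.root T) = Defs.root T.
Proof. by elim: n => //= n ->; rewrite par_root. Qed.

Lemma iter_par_depth (x : V T) : iter (depth x) (par T) x = Defs.root T.
Proof. by rewrite /depth; case: ex_minnP => m /eqP. Qed.

Lemma iter_par_ge_depth (x : V T) k :
  (depth x <= k)%N -> iter k (par T) x = Defs.root T.
Proof. by move=> le_dk; rewrite -(subnK le_dk) iterD iter_par_depth iter_par_root. Qed.

Lemma in_subtreeP (v x : V T) :
  reflect (exists k, iter k (par T) x = v) (in_subtree v x).
Proof.
apply: (iffP existsP) => [[n /eqP <-] | [k xk]]; first by exists n.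
have [le_kd | lt_dk] := leqP k (depth x).
- by exists (Ordinal (le_kd : (k < (depth x).+1)%N)); rewrite /= xk.
- exists ord_max => /=.
  by rewrite iter_par_depth -xk iter_par_ge_depth // ltnW.
Qed.

Lemma ancestor_in_subtree (v r c : V T) :
  ancestor r c -> in_subtree v r -> in_subtree v c.
Proof.
case/existsP => n /eqP cr /in_subtreeP[m rv]; apply/in_subtreeP.
by exists (m + n.+1)%N; rewrite iterD cr.
Qed.

Lemma Amat_matroid_iso (S1 S2 : {set V T}) :
  (forall r c, ancestor r c -> c \in S1 -> r \in S1) ->
  {subset S1 <= S2} ->
  (forall x, lab T x LC -> (x \in S1) = (x \in S2)) ->
  matroid_iso (col_indep (Amat S1)) (col_indep (Amat S2)).
Proof.
move=> S1_anc sub12 sameC.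
have colP12 (c : colT S1) : (val c \in S2) && lab T (val c) LC.
  by have /andP[cS1 cC] := valP c; rewrite -sameC // cS1 cC.
have colP21 (c : colT S2) : (val c \in S1) && lab T (val c) LC.
  by have /andP[cS2 cC] := valP c; rewrite sameC // cS2 cC.
pose f (c : colT S1) : colT S2 := exist _ (val c) (colP12 c).
pose g (c : colT S2) : colT S1 := exist _ (val c) (colP21 c).
have fK : cancel f g by move=> c; apply: val_inj.
have gK : cancel g f by move=> c; apply: val_inj.
apply: (col_indep_matroid_iso fK gK) => r; have /andP[rS rR] := valP r.
- have rP : (val r \in S2) && lab T (val r) LR by rewrite (sub12 _ rS) rR.
  by exists (exist _ (val r) rP).
- have [rS1 | rNS1] := boolP (val r \in S1).
  + have rP : (val r \in S1) && lab T (val r) LR by rewrite rS1 rR.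
    by right; exists (exist _ (val r) rP).
  + left=> c; have /andP[cS1 _] := valP c; rewrite /Amat /=.
    by case: ifPn => // /S1_anc/(_ cS1); rewrite (negbTE rNS1).
Qed.

End RootedTree.

Theorem lemma14 (F : fieldType) (d : nat) (T : rtree F)
  (HT : matrix_tree d T) (v : V T) :
  matroid_iso (col_indep (Amat (del_subtree v)))
              (col_indep (Amat (del_Cleaves v))).
Proof.
case: HT => _ _ C_leaf _ _.
apply: Amat_matroid_iso => [r c rc | x | x xC]; rewrite !inE.
- by apply: contra => rv; apply: ancestor_in_subtree rc rv.
- by apply: contra => /and3P[].
- by rewrite xC C_leaf // !andbT.
Qed.
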